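(* Let $\mathcal{C}_1$ and $\mathcal{C}_2$ be hypergraphs on disjoint vertex sets $V_1$ and $V_2$. Let $\mathcal{C}(\operatorname{Ind}(\mathcal{C}_1)*\operatorname{Ind}(\mathcal{C}_2))$ be the hypergraph of minimal non-faces of the join $\operatorname{Ind}(\mathcal{C}_1)*\operatorname{Ind}(\mathcal{C}_2)$ (a complex on $V_1\cup V_2$; this hypergraph has edge set $\mathcal{C}_1\cup\mathcal{C}_2$). Then $\psi(\mathcal{C}(\operatorname{Ind}(\mathcal{C}_1)*\operatorname{Ind}(\mathcal{C}_2)))=\psi(\mathcal{C}_1)+\psi(\mathcal{C}_2)$ (with $\infty+a=\infty$).
   Context: A hypergraph $\mathcal{C}$ on a finite vertex set $V$ is a family of pairwise incomparable subsets of $V$ (its edges), each of cardinality at least $2$; vertices lying in no edge are allowed. The independence complex $\operatorname{Ind}(\mathcal{C})$ is the simplicial complex on $V$ whose faces are the subsets of $V$ containing no edge of $\mathcal{C}$. For a simplicial complex $\Delta$ on $V$ (containing all singletons), $\mathcal{C}(\Delta)$ is the hypergraph on $V$ of inclusion-minimal non-faces of $\Delta$; $\operatorname{Ind}(\mathcal{C}(\Delta))=\Delta$. For an edge $F$: $\mathcal{C}-F$ is the hypergraph on $V$ with edge set $\mathcal{C}\setminus\{F\}$; $N_{\mathcal{C}}(F)=\bigcup\{E\setminus F : E\in\mathcal{C},\ |E\setminus F|=1\}$; and $\mathcal{C}:F$ is the hypergraph on $V\setminus(F\cup N_{\mathcal{C}}(F))$ whose edges are the members of cardinality at least $2$ among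 the inclusion-minimal members of the family $\{E\setminus F : E\in \mathcal{C}-F\}$. The number $\psi(\mathcal{C})\in\mathbb{Z}_{\ge 0}\cup\{\infty\}$ is defined recursively: $\psi(\mathcal{C})=0$ if $V=\emptyset$; $\psi(\mathcal{C})=\infty$ if $V\neq\emptyset$ and $\mathcal{C}$ has no edges; otherwise $\psi(\mathcal{C})=\max_{F\in\mathcal{C}}\min\{\psi(\mathcal{C}-F),\ \psi(\mathcal{C}:F)+|F|-1\}$. *)

From mathcomp Require Import all_boot.
Set Implicit Arguments. Unset Strict Implicit. Unset Printing Implicit Defensive.

(* Values in Z_{>=0} \cup {oo}: [Some n] is n, [None] is oo. *)
Definition ext_nat := option nat.

Definition emin (a b : ext_nat) : ext_nat :=
  match a, b with
  | None, _ => b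
  | _, None => a
  | Some m, Some n => Some (minn m n)
  end.

Definition emax (a b : ext_nat) : ext_nat :=
  match a, b with
  | None, _ => None
  | _, None => None
  | Some m, Some n => Some (maxn m n)
  end.

Definition eadd (a b : ext_nat) : ext_nat :=
  match a, b with
  | Some m, Some n => Some (m + n)
  | _, _ => None
  end.

Section Hyp.
Variable T : finType.

Definition is_hypergraph (V : {set T}) (E : {set {set T}}) : Prop :=
  (forall F, F \in E -> F \subset V) /\
  (forall F, F \in E -> 2 <= #|F|) /\
  (forall F G, F \in E -> G \in E -> F \subset G -> F = G).

Definition nbhd (E : {set {set T}}) (F : {set T}) : {set T} :=
  \bigcup_(G in E | #|G :\: F| == 1) (G :\: F).

Definition colon_V (V : {set T}) (E : {set {set T}}) (F : {set T}) : {set T} :=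
  V :\: (F :|: nbhd E F).

Definition colon_E (E : {set {set T}}) (F : {set T}) : {set {set T}} :=
  let D := [set G :\: F | G in E :\ F] in
  [set H in D | [forall H' in D, (H' \subset H) ==> (H' == H)] && (2 <= #|H|)].

(* psi with fuel; the fuel #|E| suffices since both recursive calls
   have strictly fewer edges. *)
Fixpoint psi_fuel (n : nat) (V : {set T}) (E : {set {set T}}) : ext_nat :=
  if V == set0 then Some 0
  else if E == set0 then None
  else match n with
       | 0 => None
       | n'.+1 =>
         \big[emax/Some 0]_(F in E)
           emin (psi_fuel n' V (E :\ F))
                (eadd (psi_fuel n' (colon_V V E F) (colon_E E F))
                      (Some (#|F| - 1)))
       end.

Definition psi (V : {set T}) (E : {set {set T}}) : ext_nat := psi_fuel #|E| V E.

Definition Ind (V : {set T}) (E : {set {set T}}) : {set {set T}} :=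
  [set S : {set T} | (S \subset V) && [forall G in E, ~~ (G \subset S)]].

(* join of complexes (on disjoint vertex sets) *)
Definition cjoin (D1 D2 : {set {set T}}) : {set {set T}} :=
  [set S1 :|: S2 | S1 in D1, S2 in D2].

Definition min_nonfaces (V : {set T}) (D : {set {set T}}) : {set {set T}} :=
  [set S : {set T} | [&& S \subset V, S \notin D & [forall x in S, (S :\ x) \in D]]].

End Hyp.

(* Proof idea: every edge of C1 is disjoint from V2 and vice versa, so deleting an
   edge F of C1, or passing to C1 u C2 : F, only affects the C1 part: the traces of
   the C2 edges on F are the C2 edges themselves, they never have a single vertex
   outside F, and they are incomparable with the traces of the C1 edges.  By
   induction on the number of edges, each branch of the recursion for
   psi(C1 u C2) at an edge F of C1 is the corresponding branch for psi(C1) plus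
   psi(C2), since adding a constant commutes with min; maximizing over the edges of
   C1 and of C2 gives psi(C1) + psi(C2).  Finally the join of the independence
   complexes is Ind(C1 u C2), whose minimal non-faces are the edges of C1 u C2. *)

From HB Require Import structures.
From mathcomp Require Import all_boot.
Set Implicit Arguments. Unset Strict Implicit. Unset Printing Implicit Defensive.

Lemma emaxA : associative emax.
Proof. by case=> [a|] [b|] [c|] //=; rewrite maxnA. Qed.

Lemma emaxC : commutative emax.
Proof. by case=> [a|] [b|] //=; rewrite maxnC. Qed.

Lemma emax0e : left_id (Some 0) emax.
Proof. by case=> [a|] //=; rewrite max0n. Qed.

HB.instance Definition _ :=
  Monoid.isComLaw.Build ext_nat (Some 0) emax emaxA emaxC emax0e.

Lemma emaxee : idempotent_op emax.
Proof. by case=> [a|] //=; rewrite maxnn. Qed.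

Lemma eaddC : commutative eadd.
Proof. by case=> [a|] [b|] //=; rewrite addnC. Qed.

Lemma eaddAC a b c : eadd (eadd a b) c = eadd (eadd a c) b.
Proof. by case: a b c => [a|] [b|] [c|] //=; rewrite addnAC. Qed.

Lemma eadd_emaxl a b c : eadd (emax a b) c = emax (eadd a c) (eadd b c).
Proof. by case: a b c => [a|] [b|] [c|] //=; rewrite addn_maxl. Qed.

Lemma eadd_eminl a b c : eadd (emin a b) c = emin (eadd a c) (eadd b c).
Proof. by case: a b c => [a|] [b|] [c|] //=; rewrite addn_minl. Qed.

Lemma emax_if0 (b1 b2 : bool) x : ~~ (b1 && b2) ->
  emax (if b1 then Some 0 else x) (if b2 then Some 0 else x) = x.
Proof.
case: b1 b2 => [] [] // _.
- exact: emax0e.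
- exact: etrans (emaxC _ _) (emax0e _).
- exact: emaxee.
Qed.

Lemma big_emax_eaddl (I : finType) (A : {set I}) (f : I -> ext_nat) c :
  A != set0 ->
  \big[emax/Some 0]_(i in A) eadd (f i) c = eadd (\big[emax/Some 0]_(i in A) f i) c.
Proof.
case/set0Pn=> i0 Ai0; rewrite (bigD1 i0) //= [in RHS](bigD1 i0) //=; move: (f i0).
apply: (big_rec2 (fun x y => forall a, emax (eadd a c) x = eadd (emax a y) c)).
  by case=> [a|]; case: c => [c|] //=; rewrite maxn0 addn0.
by move=> i x y _ IH a; rewrite emaxA -eadd_emaxl IH emaxA.
Qed.

Section PsiUnfold.
Variable T : finType.
Implicit Types (V : {set T}) (E : {set {set T}}) (F : {set T}).

Lemma card_colon_E E F : #|colon_E E F| <= #|E :\ F|.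
Proof.
apply: leq_trans (leq_imset_card (fun G => G :\: F) _).
by apply: subset_leq_card; apply/subsetP => H; rewrite inE => /andP[].
Qed.

Lemma psi_fuel_stable n m V E :
  #|E| <= n -> #|E| <= m -> psi_fuel n V E = psi_fuel m V E.
Proof.
elim: n m V E => [|n IH] [|m] V E /= le_n le_m.
all: try by move: le_n; rewrite leqn0 cards_eq0 => /eqP->; rewrite eqxx.
all: try by move: le_m; rewrite leqn0 cards_eq0 => /eqP->; rewrite eqxx.
case: (V == set0) => //; case: (E == set0) => //.
apply: eq_bigr => F FE; rewrite (cardsD1 F) FE in le_n le_m.
by rewrite (IH m) // (IH m (colon_V V E F)) // (leq_trans (card_colon_E E F)).
Qed.

Lemma psi_fuelE n V E : #|E| <= n -> psi_fuel n V E = psi V E.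
Proof. by move=> le_n; apply: psi_fuel_stable. Qed.

Definition psi_branch V E F :=
  emin (psi V (E :\ F)) (eadd (psi (colon_V V E F) (colon_E E F)) (Some (#|F| - 1))).

Lemma psiE V E : psi V E =
  if V == set0 then Some 0 else if E == set0 then None
  else \big[emax/Some 0]_(F in E) psi_branch V E F.
Proof.
rewrite /psi; case En: #|E| => [|n] /=.
  by move/eqP: En; rewrite cards_eq0 => ->.
have /negbTE-> : E != set0 by rewrite -card_gt0 En.
case: (V == set0) => //; apply: eq_bigr => F FE.
have le_n : #|E :\ F| <= n by move: En; rewrite (cardsD1 F) FE => -[<-].
by rewrite !psi_fuelE // (leq_trans (card_colon_E E F)).
Qed.

End PsiUnfold.

Section Hypergraph.
Variable T : finType.
Implicit Types (V : {set T}) (E D : {set {set T}}) (F G H : {set T}).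

Lemma disjoint_subset_eq0 V1 V2 G :
  [disjoint V1 & V2] -> G \subset V1 -> G \subset V2 -> G = set0.
Proof.
by move=> dV sG1 sG2; apply/eqP; rewrite -subset0 -(disjoint_setI0 dV) subsetI sG1.
Qed.

Lemma hypergraph_V_neq0 V E : is_hypergraph V E -> E != set0 -> V != set0.
Proof.
case=> sEV [cE _] /set0Pn[G GE].
have /set0Pn[x xG] : G != set0 by rewrite -card_gt0 ltnW ?cE.
by apply/set0Pn; exists x; apply: subsetP (sEV _ GE) _ xG.
Qed.

Lemma hypergraph_setD1 V E F : is_hypergraph V E -> is_hypergraph V (E :\ F).
Proof.
case=> sEV [cE aE]; split; [|split].
- by move=> G /setD1P[_ /sEV].
- by move=> G /setD1P[_ /cE].
- by move=> G H /setD1P[_ GE] /setD1P[_ HE]; apply: aE.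
Qed.

Definition traces E F := [set G :\: F | G in E :\ F].

Definition minimal_large D :=
  [set H in D | [forall H' in D, (H' \subset H) ==> (H' == H)] && (2 <= #|H|)].

Lemma colon_EE E F : colon_E E F = minimal_large (traces E F).
Proof. by []. Qed.

Lemma trace_sub_neq0 V E F H : is_hypergraph V E -> F \in E ->
  H \in traces E F -> (H \subset V) && (H != set0).
Proof.
case=> sEV [_ aE] FE /imsetP[G /setD1P[GF GE] ->].
rewrite (subset_trans (subsetDl G F) (sEV _ GE)) setD_eq0 /=.
by apply: contra GF => GsF; rewrite (aE _ _ GE FE GsF).
Qed.

Lemma hypergraph_colon V E F : is_hypergraph V E -> F \in E ->
  is_hypergraph (colon_V V E F) (colon_E E F).
Proof.
move=> hE FE; rewrite colon_EE; split; [|split].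
- move=> H; rewrite inE => /and3P[HD /forall_inP minH cH].
  have /andP[HV _] := trace_sub_neq0 hE FE HD.
  apply/subsetP => x xH; rewrite !inE (subsetP HV _ xH) andbT.
  have [G /setD1P[GF GE] HG] := imsetP HD.
  have xF : x \notin F by move: xH; rewrite HG inE => /andP[].
  rewrite (negbTE xF); apply/bigcupP => -[G' /andP[G'E /cards1P[y G'y]]].
  rewrite G'y inE => /eqP exy; subst y.
  have xD : [set x] \in traces E F.
    rewrite -G'y; apply: imset_f; rewrite !inE G'E andbT.
    by apply/eqP => eG; move/setP/(_ x): G'y; rewrite eG setDv !inE eqxx.
  by move: (minH _ xD); rewrite sub1set xH => /eqP eH; rewrite -eH cards1 in cH.
- by move=> H; rewrite inE => /and3P[].
- move=> H H' HE; rewrite inE => /and3P[_ /forall_inP minH' _] sHH'.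
  by apply/eqP; apply: (implyP (minH' _ _)) sHH'; case/setIdP: HE.
Qed.

Lemma card_colon_E_lt E F : F \in E -> #|colon_E E F| < #|E|.
Proof. by move=> FE; rewrite (cardsD1 F E) FE add1n ltnS card_colon_E. Qed.

Lemma card_setD1_lt E F : F \in E -> #|E :\ F| < #|E|.
Proof. by move=> FE; rewrite (cardsD1 F E) FE. Qed.

End Hypergraph.

Section MinimalLarge.
Variable T : finType.
Implicit Types (V : {set T}) (A B E : {set {set T}}).

Lemma minimal_largeU A B :
  (forall a b, a \in A -> b \in B -> ~~ (a \subset b) && ~~ (b \subset a)) ->
  minimal_large (A :|: B) = minimal_large A :|: minimal_large B.
Proof.
move=> incomp; apply/setP => H.
have minU (X Y : {set {set T}}) : (forall H', H' \in Y -> ~~ (H' \subset H)) ->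
    [forall H' in X :|: Y, (H' \subset H) ==> (H' == H)] =
    [forall H' in X, (H' \subset H) ==> (H' == H)].
  move=> notY; apply/forall_inP/forall_inP => minH H' H'X.
    by apply: minH; rewrite inE H'X.
  by case/setUP: H'X => [/minH //|/notY/negbTE->].
rewrite !inE; case HA: (H \in A); case HB: (H \in B) => //=.
- by have := incomp _ _ HA HB; rewrite subxx.
- by rewrite minU ?orbF // => H' H'B; case/andP: (incomp _ _ HA H'B).
- by rewrite setUC minU // => H' H'A; case/andP: (incomp _ _ H'A HB).
Qed.

Lemma minimal_large_id V E : is_hypergraph V E -> minimal_large E = E.
Proof.
case=> _ [cE aE]; apply/setP => H; rewrite inE; case HE: (H \in E) => //=.
rewrite cE //= andbT; apply/forall_inP => H' H'E; apply/implyP => sH'H.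
by rewrite (aE _ _ H'E HE sH'H).
Qed.

End MinimalLarge.

Section DisjointUnion.
Variable T : finType.
Implicit Types (V : {set T}) (E : {set {set T}}) (F G H : {set T}).
Variables (V1 V2 : {set T}) (E1 E2 : {set {set T}}).
Hypotheses (hE1 : is_hypergraph V1 E1) (hE2 : is_hypergraph V2 E2)
  (dV : [disjoint V1 & V2]).

Lemma edges_disjoint : [disjoint E1 & E2].
Proof.
have [sEV1 [cE1 _]] := hE1; have [sEV2 _] := hE2.
apply/pred0P => G /=; apply/negP => /andP[GE1 GE2].
by move: (cE1 _ GE1); rewrite (disjoint_subset_eq0 dV (sEV1 _ GE1) (sEV2 _ GE2)) cards0.
Qed.

Section Edge.
Variable F : {set T}.
Hypothesis FE1 : F \in E1.

Lemma setD1U_edges : (E1 :|: E2) :\ F = (E1 :\ F) :|: E2.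
Proof.
rewrite setDUl; congr (_ :|: _); apply/setDidPl.
by rewrite disjoint_sym disjoints1 (disjointFr edges_disjoint FE1).
Qed.

Lemma setD_edge2 G : G \in E2 -> G :\: F = G.
Proof.
have [sEV1 _] := hE1; have [sEV2 _] := hE2.
move=> GE2; apply/setDidPl; rewrite disjoint_sym.
exact: disjointWl (sEV1 _ FE1) (disjointWr (sEV2 _ GE2) dV).
Qed.

Lemma traces_setU : traces (E1 :|: E2) F = traces E1 F :|: E2.
Proof.
rewrite /traces setD1U_edges imsetU; congr (_ :|: _).
by rewrite (eq_in_imset (g := id)) ?imset_id //; apply: setD_edge2.
Qed.

Lemma nbhd_setU : nbhd (E1 :|: E2) F = nbhd E1 F.
Proof.
have [_ [cE2 _]] := hE2.
apply/setP => x; apply/bigcupP/bigcupP => -[G /andP[GE cGF] xG]; exists G => //.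
  case/setUP: GE => [-> //|GE2].
  by move: (cE2 _ GE2) cGF; rewrite setD_edge2 // => /gtn_eqF->.
by rewrite inE GE.
Qed.

Lemma colon_V_setU : colon_V (V1 :|: V2) (E1 :|: E2) F = colon_V V1 E1 F :|: V2.
Proof.
have [sEV1 _] := hE1.
have sFN : F :|: nbhd E1 F \subset V1.
  rewrite subUset sEV1 //=; apply/bigcupsP => G /andP[GE _].
  exact: subset_trans (subsetDl G F) (sEV1 _ GE).
rewrite /colon_V nbhd_setU setDUl; congr (_ :|: _); apply/setDidPl.
by rewrite disjoint_sym (disjointWl sFN dV).
Qed.

Lemma colon_E_setU : colon_E (E1 :|: E2) F = colon_E E1 F :|: E2.
Proof.
have [sEV2 [cE2 _]] := hE2.
rewrite !colon_EE traces_setU minimal_largeU ?(minimal_large_id hE2) // => H G HD GE2.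
have /andP[HV1 H0] := trace_sub_neq0 hE1 FE1 HD.
have G0 : G != set0 by rewrite -card_gt0 ltnW ?cE2.
apply/andP; split; apply/negP => sub.
- by move: H0; rewrite (disjoint_subset_eq0 dV HV1 (subset_trans sub (sEV2 _ GE2))) eqxx.
- by move: G0; rewrite (disjoint_subset_eq0 dV (subset_trans sub HV1) (sEV2 _ GE2)) eqxx.
Qed.

End Edge.

Lemma bigmax_psi_branch_setU :
  (forall V E, is_hypergraph V E -> V \subset V1 -> #|E| < #|E1| ->
     psi (V :|: V2) (E :|: E2) = eadd (psi V E) (psi V2 E2)) ->
  \big[emax/Some 0]_(F in E1) psi_branch (V1 :|: V2) (E1 :|: E2) F
  = if E1 == set0 then Some 0 else eadd (psi V1 E1) (psi V2 E2).
Proof.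
move=> IH; case: eqP => [->|/eqP E1n0]; first by rewrite big_set0.
have branchU F : F \in E1 ->
    psi_branch (V1 :|: V2) (E1 :|: E2) F = eadd (psi_branch V1 E1 F) (psi V2 E2).
  move=> FE1; rewrite /psi_branch setD1U_edges ?colon_V_setU ?colon_E_setU //.
  rewrite (IH _ _ (hypergraph_setD1 F hE1)) ?card_setD1_lt //.
  rewrite (IH _ _ (hypergraph_colon hE1 FE1)) ?subsetDl ?card_colon_E_lt //.
  by rewrite eaddAC eadd_eminl.
rewrite (eq_bigr _ branchU) big_emax_eaddl // [psi V1 E1]psiE (negbTE E1n0).
by rewrite (negbTE (hypergraph_V_neq0 hE1 E1n0)).
Qed.

End DisjointUnion.

Lemma psi_setU (T : finType) (V1 V2 : {set T}) (E1 E2 : {set {set T}}) :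
  is_hypergraph V1 E1 -> is_hypergraph V2 E2 -> [disjoint V1 & V2] ->
  psi (V1 :|: V2) (E1 :|: E2) = eadd (psi V1 E1) (psi V2 E2).
Proof.
have [n] := ubnP (#|E1| + #|E2|).
elim: n => // n IHn in V1 V2 E1 E2 *; rewrite ltnS => le_n hE1 hE2 dV.
have IH1 V E : is_hypergraph V E -> V \subset V1 -> #|E| < #|E1| ->
    psi (V :|: V2) (E :|: E2) = eadd (psi V E) (psi V2 E2).
  move=> hE sV ltE; apply: IHn => //; last exact: disjointWl sV dV.
  by apply: leq_trans le_n; rewrite ltn_add2r.
have IH2 V E : is_hypergraph V E -> V \subset V2 -> #|E| < #|E2| ->
    psi (V :|: V1) (E :|: E1) = eadd (psi V E) (psi V1 E1).
  move=> hE sV ltE; rewrite setUC [E :|: E1]setUC eaddC; apply: IHn => //.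
  - by apply: leq_trans le_n; rewrite ltn_add2l.
  - exact: disjointWr sV dV.
have [/andP[/eqP E10 /eqP E20]|E12n0] := boolP ((E1 == set0) && (E2 == set0)).
  rewrite E10 E20 setU0 !psiE setU_eq0 eqxx.
  by case: (V1 == set0); case: (V2 == set0).
have V12n0 : V1 :|: V2 != set0.
  rewrite setU_eq0 negb_and.
  by case/nandP: E12n0 => [/(hypergraph_V_neq0 hE1)|/(hypergraph_V_neq0 hE2)]->; rewrite ?orbT.
have dV21 : [disjoint V2 & V1] by rewrite disjoint_sym.
have big2 := bigmax_psi_branch_setU hE2 hE1 dV21 IH2.
rewrite setUC [E2 :|: E1]setUC eaddC in big2.
rewrite psiE (negbTE V12n0) setU_eq0 (negbTE E12n0) (big_setU _ _ _ emaxee).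
by rewrite (bigmax_psi_branch_setU hE1 hE2 dV IH1) big2; apply: emax_if0.
Qed.

Section Join.
Variable T : finType.
Implicit Types (V : {set T}) (E : {set {set T}}) (S G : {set T}).

Lemma min_nonfaces_Ind V E : is_hypergraph V E -> min_nonfaces V (Ind V E) = E.
Proof.
case=> sEV [_ aE]; apply/setP => S; rewrite inE; apply/idP/idP.
  case/and3P=> sSV; rewrite inE sSV negb_forall_in => /exists_inP[G GE /negPn sGS].
  move=> /forall_inP minS; suff -> : S = G by [].
  apply/eqP; rewrite eqEsubset sGS andbT; apply/subsetP => x xS; apply: contraT => xG.
  have := minS x xS; rewrite inE => /andP[_ /forall_inP/(_ G GE)].
  by rewrite subsetD1 sGS xG.
move=> SE; rewrite sEV //= inE sEV //= negb_forall_in; apply/andP; split.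
  by apply/exists_inP; exists S; rewrite ?subxx.
apply/forall_inP => x xS; rewrite inE (subset_trans (subD1set S x) (sEV _ SE)) /=.
apply/forall_inP => G GE; rewrite subsetD1; apply/negP => /andP[sGS].
by rewrite (aE _ _ GE SE sGS) xS.
Qed.

Lemma subsetU_disjoint V1 V2 G S1 S2 : [disjoint V1 & V2] ->
  G \subset V1 -> S2 \subset V2 -> (G \subset S1 :|: S2) = (G \subset S1).
Proof.
move=> dV sGV1 sS2V2; apply/idP/idP => [sG|/subset_trans->//]; last exact: subsetUl.
apply/subsetP => x xG; case/setUP: (subsetP sG _ xG) => // /(subsetP sS2V2) xV2.
by rewrite (disjointFr dV (subsetP sGV1 _ xG)) in xV2.
Qed.

Variables (V1 V2 : {set T}) (E1 E2 : {set {set T}}).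
Hypotheses (hE1 : is_hypergraph V1 E1) (hE2 : is_hypergraph V2 E2)
  (dV : [disjoint V1 & V2]).

Lemma hypergraph_setU : is_hypergraph (V1 :|: V2) (E1 :|: E2).
Proof.
have [sEV1 [cE1 aE1]] := hE1; have [sEV2 [cE2 aE2]] := hE2.
have cross G S : G \in E1 -> S \in E2 -> G \subset S \/ S \subset G -> False.
  move=> GE1 SE2 sub; have G0 : G != set0 by rewrite -card_gt0 ltnW ?cE1.
  have S0 : S != set0 by rewrite -card_gt0 ltnW ?cE2.
  case: sub => sub; [move: G0 | move: S0].
  - by rewrite (disjoint_subset_eq0 dV (sEV1 _ GE1) (subset_trans sub (sEV2 _ SE2))) eqxx.
  - by rewrite (disjoint_subset_eq0 dV (subset_trans sub (sEV1 _ GE1)) (sEV2 _ SE2)) eqxx.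
split; [|split].
- by move=> G /setUP[/sEV1|/sEV2] sub; [rewrite subsetU ?sub | rewrite subsetU ?sub ?orbT].
- by move=> G /setUP[/cE1|/cE2].
- move=> G S /setUP[GE1|GE2] /setUP[SE1|SE2] sGS; first exact: aE1.
  + by case: (cross _ _ GE1 SE2); left.
  + by case: (cross _ _ SE1 GE2); right.
  + exact: aE2.
Qed.

Lemma cjoin_Ind : cjoin (Ind V1 E1) (Ind V2 E2) = Ind (V1 :|: V2) (E1 :|: E2).
Proof.
have [sEV1 _] := hE1; have [sEV2 _] := hE2.
have dV21 : [disjoint V2 & V1] by rewrite disjoint_sym.
apply/setP => S; apply/imset2P/idP.
  case=> S1 S2; rewrite !inE => /andP[sS1 /forall_inP n1] /andP[sS2 /forall_inP n2] ->.
  rewrite setUSS //=; apply/forall_inP => G /setUP[GE1|GE2].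
  - by rewrite (subsetU_disjoint _ dV (sEV1 _ GE1) sS2) n1.
  - by rewrite setUC (subsetU_disjoint _ dV21 (sEV2 _ GE2) sS1) n2.
rewrite inE => /andP[sS /forall_inP nS]; exists (S :&: V1) (S :&: V2).
- rewrite inE subsetIr; apply/forall_inP => G GE1.
  by apply: contra (nS G (subsetP (subsetUl _ _) _ GE1)) => /subset_trans; apply; apply: subsetIl.
- rewrite inE subsetIr; apply/forall_inP => G GE2.
  by apply: contra (nS G (subsetP (subsetUr _ _) _ GE2)) => /subset_trans; apply; apply: subsetIl.
- by rewrite -setIUr; apply/esym/setIidPl.
Qed.

End Join.

Theorem proposition3p5 (T : finType) (V1 V2 : {set T}) (E1 E2 : {set {set T}}) :
  is_hypergraph V1 E1 -> is_hypergraph V2 E2 -> [disjoint V1 & V2] ->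
  psi (V1 :|: V2) (min_nonfaces (V1 :|: V2) (cjoin (Ind V1 E1) (Ind V2 E2)))
  = eadd (psi V1 E1) (psi V2 E2).
Proof.
move=> hE1 hE2 dV.
rewrite (cjoin_Ind hE1 hE2 dV) (min_nonfaces_Ind (hypergraph_setU hE1 hE2 dV)).
exact: psi_setU.
Qed.
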